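(* Let $G(z)=\sum_{n\ge0}a_n^2z^n$ with $a_n\ge0$ (infinitely many non-zero) have radius of convergence $R_G$, and put $t_G=\log R_G$, $H(z)=G(e^z)$, $B(t)=(\log H)''(t)$. Then for all $t<t_G$ and $\theta\in[-\pi,\pi]$ for which the denominator below is non-zero, \[ \frac{|H(t)H'(t+i\theta)-H(t+i\theta)H'(t)|^2}{H^2(t)\left(H^2(t)-|H(t+i\theta)|^2\right)}\le B(t). \] *)

From Stdlib Require Import Reals.
From Coquelicot Require Import Coquelicot.
Open Scope R_scope.

Definition Cexp (z : C) : C :=
  (exp (fst z) * cos (snd z), exp (fst z) * sin (snd z)).

(* G(w) = sum_n a_n^2 w^n, as a total function C -> C (real and imaginary
   parts summed separately with Coquelicot's Series; this agrees with the
   power series inside its disc of convergence). *)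
Definition Gfun (a : nat -> R) (w : C) : C :=
  (Series (fun n => a n ^ 2 * fst (Cpow w n)),
   Series (fun n => a n ^ 2 * snd (Cpow w n))).

Definition RG (a : nat -> R) : Rbar := CV_radius (fun n => a n ^ 2).

Definition Hfun (a : nat -> R) (z : C) : C := Gfun a (Cexp z).

Definition Bfun (a : nat -> R) (t : R) : R :=
  Derive_n (fun s => ln (fst (Hfun a (RtoC s)))) 2 t.

Definition is_Hderiv (a : nat -> R) (z d : C) : Prop :=
  @is_derive C_AbsRing C_NormedModule (Hfun a) z d.

From Stdlib Require Import Reals Lra.
From Coquelicot Require Import Coquelicot.
Open Scope R_scope.

(* Put x = e^t and weigh n by w_n = a_n^2 x^n.  Then H(t) = sum w_n, H'(t) = sum n w_n,
   H(t + i theta) = sum w_n e^(i n theta) and H'(t + i theta) = sum n w_n e^(i n theta),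
   while B(t) = (H H'' - H'^2) / H^2 is the variance of n under the probability weights
   w_n / H(t).  The left-hand side is |Cov(n, e^(i n theta))|^2 / Var(e^(i n theta)), so the
   inequality is the Cauchy-Schwarz inequality for the covariance. *)

Lemma is_series_Rlin (u v : nat -> R) (lu lv k : R) :
  is_series u lu -> is_series v lv -> is_series (fun n => k * u n + v n) (k * lu + lv).
Proof.
intros Hu Hv.
exact (is_series_plus _ _ _ _ (@is_series_scal R_AbsRing R_NormedModule k u lu Hu) Hv).
Qed.

Lemma Series_ge0 (u : nat -> R) : (forall n, 0 <= u n) -> ex_series u -> 0 <= Series u.
Proof.
intros Hu Hs. replace 0 with (Series (fun n => 0 * u n)) by (rewrite Series_scal_l; ring).
apply Series_le; [intros n; rewrite Rmult_0_l; split; [lra | apply Hu] | exact Hs].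
Qed.

Lemma is_series_ge0 (u : nat -> R) (l : R) : (forall n, 0 <= u n) -> is_series u l -> 0 <= l.
Proof.
intros Hu Hl. rewrite <- (is_series_unique _ _ Hl).
apply Series_ge0; [exact Hu | exists l; exact Hl].
Qed.

Lemma Series_ge_term (u : nat -> R) (m : nat) :
  (forall n, 0 <= u n) -> ex_series u -> u m <= Series u.
Proof.
revert u; induction m as [|m IHm]; intros u Hu Hs;
  rewrite (Series_incr_1 u Hs);
  assert (Htail : ex_series (fun k => u (S k))) by exact (proj1 (ex_series_incr_1 u) Hs).
- pose proof (Series_ge0 _ (fun k => Hu (S k)) Htail). lra.
- pose proof (IHm _ (fun k => Hu (S k)) Htail). pose proof (Hu 0%nat). lra.
Qed.

Lemma quadratic_form_nonneg_discr (K A B D : R) :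
  (forall p q r, 0 <= (p ^ 2 + q ^ 2) * K - 2 * r * (p * A + q * B) + r ^ 2 * D) ->
  A ^ 2 + B ^ 2 <= K * D.
Proof.
intros HQ.
assert (HK : 0 <= K) by (specialize (HQ 1 0 0); lra).
assert (HD : 0 <= D) by (specialize (HQ 0 0 1); lra).
destruct (Rle_lt_or_eq_dec _ _ HK) as [Kpos | K0].
- specialize (HQ A B K). apply Rmult_le_reg_l with K; [exact Kpos | nra].
- destruct (Rle_lt_or_eq_dec _ _ HD) as [Dpos | D0].
  + specialize (HQ (A * D) (B * D) (A ^ 2 + B ^ 2)). subst K.
    assert (0 <= (A ^ 2 + B ^ 2) * (-(A ^ 2 + B ^ 2)))
      by (apply Rmult_le_reg_l with D; [exact Dpos | nra]).
    nra.
  + specialize (HQ A B 1). subst K D. nra.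
Qed.

Section WeightedCovariance.

Variables (w f g h : nat -> R) (W F1 F2 G H Q FG FH : R).
Hypothesis w_ge0 : forall n, 0 <= w n.
Hypothesis W_gt0 : 0 < W.
Hypothesis sum_w : is_series w W.
Hypothesis sum_wf : is_series (fun n => w n * f n) F1.
Hypothesis sum_wff : is_series (fun n => w n * f n ^ 2) F2.
Hypothesis sum_wg : is_series (fun n => w n * g n) G.
Hypothesis sum_wh : is_series (fun n => w n * h n) H.
Hypothesis sum_wgh : is_series (fun n => w n * (g n ^ 2 + h n ^ 2)) Q.
Hypothesis sum_wfg : is_series (fun n => w n * (f n * g n)) FG.
Hypothesis sum_wfh : is_series (fun n => w n * (f n * h n)) FH.

Lemma weighted_covariance_form_nonneg (p q r : R) :
  0 <= (p ^ 2 + q ^ 2) * (W * F2 - F1 ^ 2)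
       - 2 * r * (p * (W * FG - F1 * G) + q * (W * FH - F1 * H))
       + r ^ 2 * (W * Q - G ^ 2 - H ^ 2).
Proof.
(* Expanding, the nonnegative series
   [sum_n w n * |(p + i q) (W f n - F1) - r (W (g n + i h n) - (G + i H))|^2]
   sums to W times the form. *)
pose proof (is_series_Rlin _ _ _ _ ((p ^ 2 + q ^ 2) * W ^ 2) sum_wff
  (is_series_Rlin _ _ _ _ (-2 * r * p * W ^ 2) sum_wfg
  (is_series_Rlin _ _ _ _ (-2 * r * q * W ^ 2) sum_wfh
  (is_series_Rlin _ _ _ _ (r ^ 2 * W ^ 2) sum_wgh
  (is_series_Rlin _ _ _ _ (-2 * (p ^ 2 + q ^ 2) * W * F1 + 2 * r * p * W * G + 2 * r * q * W * H) sum_wf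
  (is_series_Rlin _ _ _ _ (2 * r * p * W * F1 - 2 * r ^ 2 * W * G) sum_wg
  (is_series_Rlin _ _ _ _ (2 * r * q * W * F1 - 2 * r ^ 2 * W * H) sum_wh
  (@is_series_scal R_AbsRing R_NormedModule
     ((p ^ 2 + q ^ 2) * F1 ^ 2 - 2 * r * p * F1 * G - 2 * r * q * F1 * H + r ^ 2 * (G ^ 2 + H ^ 2))
     _ _ sum_w)))))))) as Hsum.
apply is_series_ge0 in Hsum.
- apply Rmult_le_reg_l with W; [exact W_gt0|]. rewrite Rmult_0_r.
  unfold scal in Hsum; simpl in Hsum; unfold mult in Hsum; simpl in Hsum.
  match type of Hsum with 0 <= ?l => replace (W * _) with l by ring end. exact Hsum.
- intros n. unfold scal; simpl; unfold mult; simpl.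
  match goal with |- 0 <= ?t => replace t with
    (w n * ((p * (W * f n - F1) - r * (W * g n - G)) ^ 2
          + (q * (W * f n - F1) - r * (W * h n - H)) ^ 2)) by ring end.
  apply Rmult_le_pos; [apply w_ge0 | apply Rplus_le_le_0_compat; apply pow2_ge_0].
Qed.

Lemma weighted_covariance_ratio_le :
  W * Q - G ^ 2 - H ^ 2 <> 0 ->
  ((W * FG - F1 * G) ^ 2 + (W * FH - F1 * H) ^ 2) / (W ^ 2 * (W * Q - G ^ 2 - H ^ 2))
  <= (W * F2 - F1 ^ 2) / W ^ 2.
Proof.
intros HD0.
assert (HD : 0 < W * Q - G ^ 2 - H ^ 2).
{ pose proof (weighted_covariance_form_nonneg 0 0 1). lra. }
pose proof (quadratic_form_nonneg_discr _ _ _ _ weighted_covariance_form_nonneg) as Hcov.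
apply Rle_trans with ((W * F2 - F1 ^ 2) * (W * Q - G ^ 2 - H ^ 2) / (W ^ 2 * (W * Q - G ^ 2 - H ^ 2))).
- apply Rmult_le_compat_r; [| exact Hcov].
  apply Rlt_le, Rinv_0_lt_compat, Rmult_lt_0_compat; [apply pow_lt, W_gt0 | exact HD].
- right. field. lra.
Qed.

End WeightedCovariance.

Definition PS_xderive (b : nat -> R) (n : nat) : R := INR n * b n.

Lemma PS_xderive_incr_1 (b : nat -> R) (n : nat) :
  PS_incr_1 (PS_derive b) n = PS_xderive b n.
Proof. destruct n; unfold PS_xderive; simpl; [unfold zero; simpl; ring | reflexivity]. Qed.

Lemma CV_radius_xderive (b : nat -> R) : CV_radius (PS_xderive b) = CV_radius b.
Proof.
rewrite <- (CV_radius_ext _ _ (PS_xderive_incr_1 b)), CV_radius_incr_1.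
apply CV_radius_derive.
Qed.

Lemma is_derive_PSeries_exp (b : nat -> R) (s : R) :
  Rbar_lt (exp s) (CV_radius b) ->
  is_derive (fun u => PSeries b (exp u)) s (PSeries (PS_xderive b) (exp s)).
Proof.
intros Hs.
assert (Hb : is_derive (PSeries b) (exp s) (PSeries (PS_derive b) (exp s))).
{ apply is_derive_PSeries. rewrite Rabs_pos_eq; [exact Hs | left; apply exp_pos]. }
replace (PSeries (PS_xderive b) (exp s)) with (scal (exp s) (PSeries (PS_derive b) (exp s))).
- exact (is_derive_comp (PSeries b) exp s _ _ Hb (is_derive_exp s)).
- rewrite <- (PSeries_ext _ _ _ (PS_xderive_incr_1 b)), PSeries_incr_1. reflexivity.
Qed.

Lemma CV_radius_dominated (a b : nat -> R) :
  (forall n, Rabs (b n) <= Rabs (a n)) -> Rbar_le (CV_radius a) (CV_radius b).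
Proof.
intros Hab. unfold CV_radius.
destruct (Lub_Rbar_correct (CV_disk a)) as [_ Ha].
destruct (Lub_Rbar_correct (CV_disk b)) as [Hb _].
apply Ha. intros r Hr. apply Hb.
apply (@ex_series_le R_AbsRing R_CompleteNormedModule _ (fun n => Rabs (a n * r ^ n))); [|exact Hr].
intros n. unfold norm; simpl; unfold abs; simpl.
rewrite Rabs_Rabsolu, !Rabs_mult.
apply Rmult_le_compat_r; [apply Rabs_pos | apply Hab].
Qed.

Lemma locally_exp_lt (r : Rbar) (t : R) :
  Rbar_lt (exp t) r -> locally t (fun s => Rbar_lt (exp s) r).
Proof.
intros Ht.
apply (proj1 (continuity_pt_filterlim exp t) (derivable_continuous_pt _ _ (derivable_pt_exp t))
  (fun s => Rbar_lt s r)).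
exact (open_Rbar_lt' _ _ Ht).
Qed.

Lemma is_series_PSeries_weighted (b c phi : nat -> R) (x : R) :
  (forall n, b n = c n * phi n) -> Rbar_lt (Rabs x) (CV_radius b) ->
  is_series (fun n => c n * x ^ n * phi n) (PSeries b x).
Proof.
intros Hb Hx.
apply (is_series_ext (fun n => b n * x ^ n)); [intros n; rewrite Hb; simpl; ring |].
apply (proj1 (is_pseries_R _ _ _)), PSeries_correct, CV_disk_correct, CV_disk_inside, Hx.
Qed.

Lemma PSeries_pos (b : nat -> R) (m : nat) (x : R) :
  (forall n, 0 <= b n) -> 0 < b m -> 0 < x -> Rbar_lt x (CV_radius b) -> 0 < PSeries b x.
Proof.
intros Hb Hm Hx Hrad.
apply Rlt_le_trans with (b m * x ^ m); [apply Rmult_lt_0_compat; [exact Hm | apply pow_lt, Hx]|].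
unfold PSeries. apply (Series_ge_term (fun n => b n * x ^ n) m).
- intros n. apply Rmult_le_pos; [apply Hb | apply pow_le; lra].
- apply ex_series_Rabs, CV_disk_inside. rewrite Rabs_pos_eq; [exact Hrad | lra].
Qed.

Lemma is_derive_C_bound (f : C -> C) (z d : C) :
  @is_derive C_AbsRing C_NormedModule f z d ->
  forall eps : posreal, exists delta : posreal, forall w, Cmod (w - z) < delta ->
    Cmod (f w - f z - (w - z) * d) <= eps * Cmod (w - z).
Proof.
intros [_ Hd] eps.
destruct (Hd z (fun P HP => HP) eps) as [delta Hdelta].
exists delta. intros w Hw. exact (Hdelta w Hw).
Qed.

Lemma is_derive_of_bound (g : R -> R) (x l : R) :
  (forall eps : posreal, exists delta : posreal, forall y, Rabs (y - x) < delta ->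
     Rabs (g y - g x - (y - x) * l) <= eps * Rabs (y - x)) ->
  is_derive g x l.
Proof.
intros Hg. split; [apply is_linear_scal_l |].
intros x' Hx'. rewrite <- (is_filter_lim_locally_unique _ _ Hx').
intros eps. destruct (Hg eps) as [delta Hdelta].
exists delta. intros y Hy. exact (Hdelta y Hy).
Qed.

Lemma Cminus_horizontal (s x y : R) : ((s, y) - (x, y))%C = RtoC (s - x).
Proof. unfold Cminus, Cplus, Copp, RtoC; simpl. f_equal; ring. Qed.

Lemma is_derive_Re_horizontal (f : C -> C) (x y : R) (d : C) :
  @is_derive C_AbsRing C_NormedModule f (x, y) d ->
  is_derive (fun s => Re (f (s, y))) x (Re d).
Proof.
intros Hd. apply is_derive_of_bound. intros eps.
destruct (is_derive_C_bound _ _ _ Hd eps) as [delta Hdelta].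
exists delta. intros s Hs.
specialize (Hdelta (s, y)). rewrite Cminus_horizontal, Cmod_R in Hdelta.
eapply Rle_trans; [| apply Hdelta, Hs].
eapply Rle_trans; [| apply re_le_Cmod].
right. f_equal. unfold Re, Cminus, Cplus, Copp, Cmult, RtoC; simpl. ring.
Qed.

Lemma is_derive_Im_horizontal (f : C -> C) (x y : R) (d : C) :
  @is_derive C_AbsRing C_NormedModule f (x, y) d ->
  is_derive (fun s => Im (f (s, y))) x (Im d).
Proof.
intros Hd. apply is_derive_of_bound. intros eps.
destruct (is_derive_C_bound _ _ _ Hd eps) as [delta Hdelta].
exists delta. intros s Hs.
specialize (Hdelta (s, y)). rewrite Cminus_horizontal, Cmod_R in Hdelta.
eapply Rle_trans; [| apply Hdelta, Hs].
eapply Rle_trans; [| apply Rmax_Cmod]. eapply Rle_trans; [| apply Rmax_r].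
right. f_equal. unfold Im, Cminus, Cplus, Copp, Cmult, RtoC; simpl. ring.
Qed.

Definition PS_cos (b : nat -> R) (theta : R) (n : nat) : R := b n * cos (INR n * theta).
Definition PS_sin (b : nat -> R) (theta : R) (n : nat) : R := b n * sin (INR n * theta).

Lemma CV_radius_PS_cos (b : nat -> R) (theta : R) :
  Rbar_le (CV_radius b) (CV_radius (PS_cos b theta)).
Proof.
apply CV_radius_dominated. intros n. unfold PS_cos. rewrite Rabs_mult.
pose proof (Rabs_pos (b n)). pose proof (COS_bound (INR n * theta)).
assert (Rabs (cos (INR n * theta)) <= 1) by (apply Rabs_le; lra). nra.
Qed.

Lemma CV_radius_PS_sin (b : nat -> R) (theta : R) :
  Rbar_le (CV_radius b) (CV_radius (PS_sin b theta)).
Proof.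
apply CV_radius_dominated. intros n. unfold PS_sin. rewrite Rabs_mult.
pose proof (Rabs_pos (b n)). pose proof (SIN_bound (INR n * theta)).
assert (Rabs (sin (INR n * theta)) <= 1) by (apply Rabs_le; lra). nra.
Qed.

Lemma Cpow_polar (r theta : R) (n : nat) :
  Cpow (r * cos theta, r * sin theta) n
  = (r ^ n * cos (INR n * theta), r ^ n * sin (INR n * theta)).
Proof.
induction n as [|n IHn].
- simpl. rewrite Rmult_0_l, cos_0, sin_0. unfold RtoC. f_equal; ring.
- simpl Cpow. rewrite IHn, S_INR.
  replace ((INR n + 1) * theta) with (theta + INR n * theta) by ring.
  rewrite cos_plus, sin_plus. unfold Cmult; simpl. f_equal; ring.
Qed.

Lemma Hfun_polar (a : nat -> R) (s theta : R) :
  Hfun a (s, theta) = (PSeries (PS_cos (fun n => a n ^ 2) theta) (exp s),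
                       PSeries (PS_sin (fun n => a n ^ 2) theta) (exp s)).
Proof.
unfold Hfun, Gfun, Cexp, PSeries; simpl.
f_equal; apply Series_ext; intros n; rewrite Cpow_polar; simpl; unfold PS_cos, PS_sin; ring.
Qed.

Lemma PS_cos_0 (b : nat -> R) (n : nat) : PS_cos b 0 n = b n.
Proof. unfold PS_cos. rewrite Rmult_0_r, cos_0. ring. Qed.

Lemma PS_sin_0 (b : nat -> R) (n : nat) : PS_sin b 0 n = 0.
Proof. unfold PS_sin. rewrite Rmult_0_r, sin_0. ring. Qed.

Lemma Hfun_real (a : nat -> R) (s : R) :
  Hfun a (RtoC s) = RtoC (PSeries (fun n => a n ^ 2) (exp s)).
Proof.
change (RtoC s) with (s, 0). rewrite Hfun_polar. unfold RtoC. f_equal.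
- apply PSeries_ext, PS_cos_0.
- rewrite (PSeries_ext _ _ _ (PS_sin_0 _)). apply PSeries_const_0.
Qed.

Lemma is_Hderiv_polar (a : nat -> R) (s theta : R) (d : C) :
  Rbar_lt (exp s) (RG a) -> is_Hderiv a (s, theta) d ->
  d = (PSeries (PS_xderive (PS_cos (fun n => a n ^ 2) theta)) (exp s),
       PSeries (PS_xderive (PS_sin (fun n => a n ^ 2) theta)) (exp s)).
Proof.
intros Hs Hd.
apply injective_projections; [change (fst d) with (Re d) | change (snd d) with (Im d)].
- rewrite <- (is_derive_unique _ _ _ (is_derive_Re_horizontal _ _ _ _ Hd)).
  apply is_derive_unique.
  eapply is_derive_ext; [intros u; unfold Re; rewrite Hfun_polar; reflexivity |].
  apply is_derive_PSeries_exp.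
  eapply Rbar_lt_le_trans; [exact Hs | apply CV_radius_PS_cos].
- rewrite <- (is_derive_unique _ _ _ (is_derive_Im_horizontal _ _ _ _ Hd)).
  apply is_derive_unique.
  eapply is_derive_ext; [intros u; unfold Im; rewrite Hfun_polar; reflexivity |].
  apply is_derive_PSeries_exp.
  eapply Rbar_lt_le_trans; [exact Hs | apply CV_radius_PS_sin].
Qed.

Lemma is_Hderiv_real (a : nat -> R) (s : R) (d : C) :
  Rbar_lt (exp s) (RG a) -> is_Hderiv a (RtoC s) d ->
  d = RtoC (PSeries (PS_xderive (fun n => a n ^ 2)) (exp s)).
Proof.
intros Hs Hd. rewrite (is_Hderiv_polar a s 0 d Hs Hd). unfold RtoC. f_equal.
- apply PSeries_ext. intros n. unfold PS_xderive. rewrite PS_cos_0. reflexivity.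
- rewrite (PSeries_ext _ (fun _ => 0)); [apply PSeries_const_0 |].
  intros n. unfold PS_xderive. rewrite PS_sin_0. ring.
Qed.

Lemma Derive_2_ln_PSeries_exp (b : nat -> R) (m : nat) (t : R) :
  (forall n, 0 <= b n) -> 0 < b m -> Rbar_lt (exp t) (CV_radius b) ->
  Derive_n (fun s => ln (PSeries b (exp s))) 2 t
  = (PSeries b (exp t) * PSeries (PS_xderive (PS_xderive b)) (exp t)
     - PSeries (PS_xderive b) (exp t) ^ 2) / PSeries b (exp t) ^ 2.
Proof.
intros Hb Hm Ht.
assert (Hpos : forall s, Rbar_lt (exp s) (CV_radius b) -> 0 < PSeries b (exp s)).
{ intros s Hs. exact (PSeries_pos b m _ Hb Hm (exp_pos s) Hs). }
change (Derive_n _ 2 t) with (Derive (Derive (fun s => ln (PSeries b (exp s)))) t).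
rewrite (Derive_ext_loc _ (fun s => PSeries (PS_xderive b) (exp s) / PSeries b (exp s))).
- set (S := PSeries b (exp t)). set (M1 := PSeries (PS_xderive b) (exp t)).
  replace ((S * _ - M1 ^ 2) / S ^ 2)
    with ((PSeries (PS_xderive (PS_xderive b)) (exp t) * S - M1 * M1) / S ^ 2)
    by (unfold Rdiv; ring).
  apply is_derive_unique,
    (is_derive_div (fun s => PSeries (PS_xderive b) (exp s)) (fun s => PSeries b (exp s))).
  + apply is_derive_PSeries_exp. rewrite CV_radius_xderive. exact Ht.
  + exact (is_derive_PSeries_exp b t Ht).
  + apply Rgt_not_eq, Hpos, Ht.
- apply (filter_imp (fun s => Rbar_lt (exp s) (CV_radius b))); [| exact (locally_exp_lt _ _ Ht)].
  intros s Hs. apply is_derive_unique.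
  exact (is_derive_comp ln (fun u => PSeries b (exp u)) s _ _
           (is_derive_ln _ (Hpos s Hs)) (is_derive_PSeries_exp b s Hs)).
Qed.

Lemma PSeries_rotation_covariance_le (c : nat -> R) (theta x : R) :
  (forall n, 0 <= c n) -> 0 <= x -> Rbar_lt x (CV_radius c) -> 0 < PSeries c x ->
  PSeries c x ^ 2 - PSeries (PS_cos c theta) x ^ 2 - PSeries (PS_sin c theta) x ^ 2 <> 0 ->
  ((PSeries c x * PSeries (PS_xderive (PS_cos c theta)) x
    - PSeries (PS_xderive c) x * PSeries (PS_cos c theta) x) ^ 2
   + (PSeries c x * PSeries (PS_xderive (PS_sin c theta)) x
      - PSeries (PS_xderive c) x * PSeries (PS_sin c theta) x) ^ 2)
  / (PSeries c x ^ 2 * (PSeries c x ^ 2 - PSeries (PS_cos c theta) x ^ 2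
                        - PSeries (PS_sin c theta) x ^ 2))
  <= (PSeries c x * PSeries (PS_xderive (PS_xderive c)) x - PSeries (PS_xderive c) x ^ 2)
     / PSeries c x ^ 2.
Proof.
intros Hc Hx Hrad HS HD.
assert (Hmoment : forall b phi, (forall n, b n = c n * phi n) ->
          Rbar_le (CV_radius c) (CV_radius b) ->
          is_series (fun n => c n * x ^ n * phi n) (PSeries b x)).
{ intros b phi Hb Hr. apply is_series_PSeries_weighted; [exact Hb |].
  rewrite Rabs_pos_eq by exact Hx. eapply Rbar_lt_le_trans; eassumption. }
replace (PSeries c x ^ 2 - _ - _) with
  (PSeries c x * PSeries c x - PSeries (PS_cos c theta) x ^ 2 - PSeries (PS_sin c theta) x ^ 2)
  in HD |- * by ring.
apply (weighted_covariance_ratio_le (fun n => c n * x ^ n) INR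
         (fun n => cos (INR n * theta)) (fun n => sin (INR n * theta))).
- intros n. apply Rmult_le_pos; [apply Hc | apply pow_le, Hx].
- exact HS.
- apply (is_series_ext (fun n => c n * x ^ n * 1)); [intros n; simpl; ring |].
  apply Hmoment; [intros n; ring | apply Rbar_le_refl].
- apply Hmoment; [intros n; unfold PS_xderive; ring | rewrite CV_radius_xderive; apply Rbar_le_refl].
- apply Hmoment; [intros n; unfold PS_xderive; ring | rewrite !CV_radius_xderive; apply Rbar_le_refl].
- apply Hmoment; [intros n; unfold PS_cos; ring | apply CV_radius_PS_cos].
- apply Hmoment; [intros n; unfold PS_sin; ring | apply CV_radius_PS_sin].
- apply Hmoment; [| apply Rbar_le_refl].
  intros n. rewrite <- !Rsqr_pow2, Rplus_comm, sin2_cos2. ring.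
- apply Hmoment; [intros n; unfold PS_xderive, PS_cos; ring |].
  rewrite CV_radius_xderive. apply CV_radius_PS_cos.
- apply Hmoment; [intros n; unfold PS_xderive, PS_sin; ring |].
  rewrite CV_radius_xderive. apply CV_radius_PS_sin.
- exact HD.
Qed.

Theorem corollary5p3 (a : nat -> R)
  (ha_nonneg : forall n, 0 <= a n)
  (ha_inf : forall N : nat, exists n, (N <= n)%nat /\ a n <> 0)
  (t theta : R)
  (ht : Rbar_lt (Finite (exp t)) (RG a))   (* t < t_G = log R_G *)
  (hth : - PI <= theta <= PI)
  (dt dz : C)
  (hdt : is_Hderiv a (RtoC t) dt)                 (* dt = H'(t) *)
  (hdz : is_Hderiv a (t, theta) dz)               (* dz = H'(t + i theta) *)
  (hden : (fst (Hfun a (RtoC t))) ^ 2 *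
          ((fst (Hfun a (RtoC t))) ^ 2 - (Cmod (Hfun a (t, theta))) ^ 2) <> 0) :
  (Cmod (Cminus (Cmult (Hfun a (RtoC t)) dz) (Cmult (Hfun a (t, theta)) dt))) ^ 2
  / ((fst (Hfun a (RtoC t))) ^ 2 *
     ((fst (Hfun a (RtoC t))) ^ 2 - (Cmod (Hfun a (t, theta))) ^ 2))
  <= Bfun a t.
Proof.
set (c := fun n => a n ^ 2).
destruct (ha_inf 0%nat) as [m [_ Ham]].
assert (Hc : forall n, 0 <= c n) by (intros n; apply pow2_ge_0).
assert (Hcm : 0 < c m) by (apply pow2_gt_0, Ham).
unfold Bfun.
rewrite (Derive_n_ext _ (fun s => ln (PSeries c (exp s))))
  by (intros s; rewrite Hfun_real; reflexivity).
rewrite (Derive_2_ln_PSeries_exp c m t Hc Hcm ht).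
rewrite (is_Hderiv_real a t dt ht hdt), (is_Hderiv_polar a t theta dz ht hdz).
rewrite Hfun_real, Hfun_polar in *. fold c in hden |- *.
rewrite !Cmod2_alt in *. unfold Re, Im in *. cbn [fst snd RtoC Cminus Cplus Copp Cmult] in *.
eapply Rle_trans; [right | apply (PSeries_rotation_covariance_le c theta)].
- unfold Rdiv. f_equal; [ring | f_equal; ring].
- exact Hc.
- apply Rlt_le, exp_pos.
- exact ht.
- exact (PSeries_pos c m _ Hc Hcm (exp_pos t) ht).
- intros E. apply hden, Rmult_eq_0_compat_l. lra.
Qed.
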